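(* Let $n\ge1$ be a natural number, let $a,b,\alpha,\beta$ be variables (with $\beta a-\alpha b\neq0$), and write $\Psi_r(n)=\Psi\left(\begin{array}{cc|c} a & b & n \\ \alpha & \beta & r \end{array}\right)$, $\Phi_r(n)=\Phi\left(\begin{array}{cc|c} a & b & n \\ \alpha & \beta & r \end{array}\right)$. Let $E=a\frac{\partial}{\partial \alpha}+b\frac{\partial}{\partial \beta}$ (so $a,b$ are held constant). Then \[ \Psi_r(n)=-\frac{1}{\lfloor n/2\rfloor-r}\,E\,\Psi_{r+1}(n)\quad\text{for }0\le r\le\lfloor n/2\rfloor-1, \] \[ \Phi_r(n)=-\frac{1}{\lfloor (n-1)/2\rfloor-r}\,E\,\Phi_{r+1}(n)\quad\text{for }0\le r\le\lfloor (n-1)/2\rfloor-1. \]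
   Context: $\delta(m)=1$ for $m$ odd, $0$ for $m$ even; $\lfloor\cdot\rfloor$ is the floor. For indeterminates $a,b,\alpha,\beta$ and $n\ge1$, $\Psi\left(\begin{array}{cc|c} a & b & n \\ \alpha & \beta & r \end{array}\right)$ ($0\le r\le\lfloor n/2\rfloor$) and $\Phi\left(\begin{array}{cc|c} a & b & n \\ \alpha & \beta & r \end{array}\right)$ ($0\le r\le\lfloor (n-1)/2\rfloor$) are the unique polynomials in $\mathbb{Z}[a,b,\alpha,\beta]$ such that, identically in $x,y$, $(\beta a-\alpha b)^{\lfloor n/2\rfloor}\frac{x^n+y^n}{(x+y)^{\delta(n)}}=\sum_{r}\Psi\left(\begin{array}{cc|c} a & b & n \\ \alpha & \beta & r \end{array}\right)(\alpha x^2+\beta xy+\alpha y^2)^{\lfloor n/2\rfloor-r}(ax^2+bxy+ay^2)^r$ and $(\beta a-\alpha b)^{\lfloor (n-1)/2\rfloor}\frac{x^n-y^n}{(x-y)(x+y)^{\delta(n-1)}}=\sum_{r}\Phi\left(\begin{array}{cc|c} a & b & n \\ \alpha & \beta & r \end{array}\right)(\alpha x^2+\beta xy+\alpha y^2)^{\lfloor (n-1)/2\rfloor-r}(ax^2+bxy+ay^2)^r$. *)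

From HB Require Import structures.
From mathcomp Require Import all_boot all_order all_algebra.
From mathcomp Require Import mpoly.
Set Implicit Arguments. Unset Strict Implicit. Unset Printing Implicit Defensive.
Import GRing.Theory.
Local Open Scope ring_scope.

Definition P4 := {mpoly int[4]}.
Definition va : P4 := 'X_(inord 0).
Definition vb : P4 := 'X_(inord 1).
Definition valpha : P4 := 'X_(inord 2).
Definition vbeta : P4 := 'X_(inord 3).

Definition PXY := {poly {poly P4}}.
Definition cst (c : P4) : PXY := c%:P%:P.
Definition vx : PXY := 'X.
Definition vy : PXY := ('X : {poly P4})%:P.

Definition delta (m : nat) : nat := odd m.

Definition Dab : P4 := vbeta * va - valpha * vb.
Definition Qalpha : PXY := cst valpha * vx ^+ 2 + cst vbeta * vx * vy + cst valpha * vy ^+ 2.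
Definition Qa : PXY := cst va * vx ^+ 2 + cst vb * vx * vy + cst va * vy ^+ 2.

(* The defining identity of Psi(a b n | alpha beta r), r = 0..floor(n/2),
   with the exact division by (x+y)^delta(n) cleared. *)
Definition is_Psi (n : nat) (P : nat -> P4) : Prop :=
  (vx + vy) ^+ delta n *
    (\sum_(r < (n./2).+1) cst (P r) * Qalpha ^+ (n./2 - r) * Qa ^+ r)
  = cst (Dab ^+ (n./2)) * (vx ^+ n + vy ^+ n).

(* The defining identity of Phi(a b n | alpha beta r), r = 0..floor((n-1)/2),
   with the exact division by (x-y)(x+y)^delta(n-1) cleared. *)
Definition is_Phi (n : nat) (P : nat -> P4) : Prop :=
  (vx - vy) * (vx + vy) ^+ delta n.-1 *
    (\sum_(r < (n.-1./2).+1) cst (P r) * Qalpha ^+ (n.-1./2 - r) * Qa ^+ r)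
  = cst (Dab ^+ (n.-1./2)) * (vx ^+ n - vy ^+ n).

Definition Eop (p : P4) : P4 :=
  va * mderiv (inord 2) p + vb * mderiv (inord 3) p.

(* Write m for the exponent of the prefactor, so that both identities read
   W * sum_r P_r Qalpha^(m-r) Qa^r = Dab^m * V with E(W) = E(V) = E(Dab) = 0.
   Extended coefficientwise to polynomials in x, y, the derivation E kills x, y
   and Qa and sends Qalpha to Qa, so it annihilates the sum; expanding, the
   coefficient of Qalpha^(m-s) Qa^s becomes E(P_s) + (m-s+1) P_(s-1).  These
   products are linearly independent over Z[a,b,alpha,beta]: since
   a * Qalpha = Dab * x * y (mod Qa), Qa dividing c * Qalpha^k would make it
   divide the monomial c * Dab^k * x^k * y^k, impossible for a polynomial in x
   of positive degree with nonzero constant term. *)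

From HB Require Import structures.
From mathcomp Require Import all_boot all_order all_algebra.
From mathcomp Require Import mpoly.
From mathcomp Require Import ring zify.
Set Implicit Arguments.
Unset Strict Implicit.
Unset Printing Implicit Defensive.
Import GRing.Theory.
Local Open Scope ring_scope.

Section Derivation.
Variables (R : comNzRingType) (d : {additive R -> R}).
Hypothesis derM : forall x y, d (x * y) = d x * y + x * d y.

Lemma derivation1 : d 1 = 0.
Proof.
have h := derM 1 1; rewrite !(mulr1, mul1r) in h.
by apply: (addrI (d 1)); rewrite -h addr0.
Qed.

Lemma derivationXn x k : d (x ^+ k) = x ^+ k.-1 * d x *+ k.
Proof.
elim: k => [|k IHk]; first by rewrite derivation1 mulr0n.
rewrite exprS derM IHk; case: k {IHk} => [|k] /=.
  by rewrite expr0 mulr0n mulr0 addr0 mulr1 mul1r.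
by rewrite mulrnAr mulrA -exprS [RHS]mulrS [d x * _]mulrC.
Qed.

Lemma derivationXn_eq0 x k : d x = 0 -> d (x ^+ k) = 0.
Proof. by move=> dx; rewrite derivationXn dx mulr0 mul0rn. Qed.

Lemma map_poly_derM (p q : {poly R}) :
  map_poly d (p * q) = map_poly d p * q + p * map_poly d q.
Proof.
apply/polyP=> i; rewrite coefD !coef_map !coefM raddf_sum -big_split /=.
by apply: eq_bigr => j _; rewrite derM !coef_map.
Qed.

Lemma map_poly_derX : map_poly d 'X = 0.
Proof.
apply/polyP=> i; rewrite coef_map coefX coef0.
by case: (i == 1)%N; rewrite ?derivation1 ?raddf0.
Qed.
End Derivation.

Section HomogeneousForm.
Variables (C A : comNzRingType) (K : {rmorphism C -> A}).

Definition sym_quad (u v : C) (x y : A) : A :=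
  K u * x ^+ 2 + K v * x * y + K u * y ^+ 2.

Variables U Q : A.

Definition homog_form m (c : nat -> C) : A :=
  \sum_(s < m.+1) K (c s) * U ^+ (m - s) * Q ^+ s.

Lemma homog_formD m c1 c2 :
  homog_form m (fun s => c1 s + c2 s) = homog_form m c1 + homog_form m c2.
Proof. by rewrite -big_split; apply: eq_bigr => s _; rewrite rmorphD !mulrDl. Qed.

Lemma homog_form0 c : homog_form 0 c = K (c 0%N).
Proof. by rewrite /homog_form big_ord1 !expr0 !mulr1. Qed.

Lemma homog_formS m c :
  homog_form m.+1 c = K (c 0%N) * U ^+ m.+1 + Q * homog_form m (fun s => c s.+1).
Proof.
rewrite /homog_form big_ord_recl subn0 expr0 mulr1 mulr_sumr; congr (_ + _).
by apply: eq_bigr => s _; rewrite /= subSS exprS; ring.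
Qed.

Section Independence.
Hypotheses (Q_lreg : GRing.lreg Q)
  (Q_ndvd : forall c k h, K c * U ^+ k = Q * h -> c = 0).

Lemma homog_form_eq0 m c :
  homog_form m c = 0 -> forall s, (s <= m)%N -> c s = 0.
Proof.
elim: m c => [|m IHm] c.
  rewrite homog_form0 => Kc0 [|] // _.
  by apply: (@Q_ndvd _ 0 0); rewrite Kc0 mulr0 mul0r.
rewrite homog_formS => /eqP; rewrite addr_eq0 => /eqP eq_c0.
have c0 : c 0%N = 0 by apply: (@Q_ndvd _ m.+1); rewrite eq_c0 -mulrN.
move: eq_c0; rewrite c0 rmorph0 mul0r => /esym/eqP; rewrite oppr_eq0 -(mulr0 Q) => /eqP.
by move=> /Q_lreg hc [|s] // /(IHm _ hc).
Qed.
End Independence.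

Section Derivative.
Variables (E : {additive C -> C}) (d : {additive A -> A}).
Hypotheses (dM : forall x y, d (x * y) = d x * y + x * d y)
  (dK : forall c, d (K c) = K (E c)).

Lemma der_sym_quad u v x y :
  d x = 0 -> d y = 0 -> d (sym_quad u v x y) = sym_quad (E u) (E v) x y.
Proof.
move=> dx dy; rewrite /sym_quad !raddfD /= -mulrA !dM !dK dx dy.
by rewrite !(mulr0, mul0r, addr0) mulrA.
Qed.

Hypotheses (dU : d U = Q) (dQ : d Q = 0).

Lemma der_homog_form m c :
  d (homog_form m c) = homog_form m (fun s => E (c s) +
    if s is s'.+1 then (m - s')%:R * c s' else 0).
Proof.
have dterm s : d (K (c s) * U ^+ (m - s) * Q ^+ s) =
    K (E (c s)) * U ^+ (m - s) * Q ^+ s +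
    K (c s) * (U ^+ (m - s).-1 * Q *+ (m - s)) * Q ^+ s.
  by rewrite !dM dK !derivationXn // dU dQ mulr0 mul0rn mulr0 addr0 mulrDl.
rewrite homog_formD raddf_sum (eq_bigr _ (fun (s : 'I_m.+1) _ => dterm s)).
rewrite big_split /=; congr (_ + _).
rewrite /homog_form big_ord_recr [RHS]big_ord_recl /= subnn mulr0n mulr0 mul0r.
rewrite rmorph0 !mul0r addr0 add0r; apply: eq_bigr => i _.
by rewrite rmorphM rmorph_nat /bump /= add1n subnS -mulr_natl exprS; ring.
Qed.

Lemma homog_form_recurrence
    (Q_lreg : GRing.lreg Q) (Q_ndvd : forall c k h, K c * U ^+ k = Q * h -> c = 0)
    m (W V : A) (D : C) (P : nat -> C) :
  E D = 0 -> GRing.lreg W -> d W = 0 -> d V = 0 ->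
  W * homog_form m P = K D * V ->
  forall r, (r < m)%N -> (m - r)%:R * P r = - E (P r.+1).
Proof.
move=> ED W_lreg dW dV eq_WV r lt_rm.
have dP : d (homog_form m P) = 0.
  apply: W_lreg; have := congr1 d eq_WV.
  by rewrite !dM dW dK ED dV rmorph0 !mul0r !mulr0 !add0r.
move: dP; rewrite der_homog_form => /homog_form_eq0 - /(_ Q_lreg Q_ndvd _ lt_rm).
by move=> /eqP; rewrite addrC addr_eq0 => /eqP.
Qed.
End Derivative.
End HomogeneousForm.

Lemma monomial_multiple_eq0 (R : idomainType) (Q h : {poly R}) (c : R) j :
  Q`_0 != 0 -> (1 < size Q)%N -> c%:P * 'X^j = Q * h -> c = 0.
Proof.
move=> Q0_neq0 Q_gt1; elim: j h => [|j IHj] h.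
  rewrite expr0 mulr1; have [-> /eqP|h_neq0 eq_cQh] := eqVneq h 0.
    by rewrite mulr0 polyC_eq0 => /eqP.
  have := size_polyC_leq1 c.
  rewrite eq_cQh size_mul ?h_neq0 -?size_poly_gt0 ?(ltnW Q_gt1) //.
  by have := size_poly_gt0 h; rewrite h_neq0; lia.
move=> eq_cQh; have h0 : h`_0 = 0.
  have /eqP := congr1 (coefp 0) eq_cQh.
  by rewrite /= coefMXn coef0M eq_sym mulf_eq0 (negbTE Q0_neq0) => /eqP.
have /factor_theorem[h' eq_h] : root h 0 by rewrite rootE horner_coef0 h0.
move: eq_cQh; rewrite eq_h subr0 exprSr !mulrA => /(mulIf (negbT (polyX_eq0 R))).
exact: IHj.
Qed.

Lemma exprD_multiple (R : comPzRingType) (v Q w : R) k :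
  exists g, (v + Q * w) ^+ k = v ^+ k + Q * g.
Proof.
exists (w * \sum_(i < k) (v + Q * w) ^+ (k.-1 - i) * v ^+ i).
have := subrXX (v + Q * w) v k; rewrite addrAC subrr add0r => eq_XX.
by rewrite mulrA -eq_XX subrKC.
Qed.

Lemma multiple_mul_expr_congr (R : comPzRingType) (Q U D a w c h : R) k :
  a * U = D + Q * w -> c * U ^+ k = Q * h -> exists g, c * D ^+ k = Q * g.
Proof.
move=> eq_aU eq_cU; have [g eq_g] := exprD_multiple D Q w k.
exists (a ^+ k * h - c * g).
have -> : D ^+ k = (a * U) ^+ k - Q * g by rewrite eq_aU eq_g addrK.
by rewrite exprMn mulrBr mulrCA eq_cU; ring.
Qed.

Lemma mderiv_mpolyX (R : nzRingType) n (i j : 'I_n) :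
  mderiv j ('X_i : {mpoly R[n]}) = (i == j)%:R.
Proof.
rewrite mderivX mnm1E; case: eqP => [->|_]; last by rewrite scale0r.
by rewrite -{1}[U_(j)%MM]add0m addmK mpolyX0 scale1r.
Qed.

Lemma Eop_va : Eop va = 0.
Proof. by rewrite /Eop /va !mderiv_mpolyX -!val_eqE /= !inordK // !mulr0 addr0. Qed.

Lemma Eop_vb : Eop vb = 0.
Proof. by rewrite /Eop /vb !mderiv_mpolyX -!val_eqE /= !inordK // !mulr0 addr0. Qed.

Lemma Eop_valpha : Eop valpha = va.
Proof.
by rewrite /Eop /valpha !mderiv_mpolyX -!val_eqE /= !inordK // mulr1 mulr0 addr0.
Qed.

Lemma Eop_vbeta : Eop vbeta = vb.
Proof.
by rewrite /Eop /vbeta !mderiv_mpolyX -!val_eqE /= !inordK // mulr1 mulr0 add0r.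
Qed.

Lemma Eop_is_zmod_morphism : zmod_morphism Eop.
Proof. by move=> p q; rewrite /Eop !mderivB !mulrBr addrACA opprD. Qed.

HB.instance Definition _ :=
  GRing.isZmodMorphism.Build P4 P4 Eop Eop_is_zmod_morphism.

Lemma EopM p q : Eop (p * q) = Eop p * q + p * Eop q.
Proof. rewrite /Eop !mderivM; ring. Qed.

Lemma Eop_Dab : Eop Dab = 0.
Proof.
by rewrite /Dab raddfB /= !EopM Eop_va Eop_vb Eop_valpha Eop_vbeta; ring.
Qed.

HB.instance Definition _ := GRing.RMorphism.copy cst (polyC \o polyC).

Definition Exy (p : PXY) : PXY := map_poly (map_poly Eop) p.
HB.instance Definition _ := GRing.Additive.copy Exy (map_poly (map_poly Eop)).

Lemma ExyM p q : Exy (p * q) = Exy p * q + p * Exy q.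
Proof. exact/map_poly_derM/map_poly_derM/EopM. Qed.

Lemma Exy_cst c : Exy (cst c) = cst (Eop c).
Proof. by rewrite /Exy /cst map_polyC; congr (_%:P); exact: map_polyC. Qed.

Lemma Exy_vx : Exy vx = 0.
Proof. exact/map_poly_derX/map_poly_derM/EopM. Qed.

Lemma Exy_vy : Exy vy = 0.
Proof. by rewrite /Exy /vy map_polyC /= map_poly_derX ?raddf0 //; exact: EopM. Qed.

Lemma Exy_Qalpha : Exy Qalpha = Qa.
Proof.
have := der_sym_quad ExyM Exy_cst valpha vbeta Exy_vx Exy_vy.
by rewrite /= Eop_valpha Eop_vbeta.
Qed.

Lemma Exy_Qa : Exy Qa = 0.
Proof.
have := der_sym_quad ExyM Exy_cst va vb Exy_vx Exy_vy.
rewrite /= Eop_va Eop_vb => ->.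
by rewrite /sym_quad rmorph0 !mul0r !addr0.
Qed.

Lemma va_neq0 : va != 0.
Proof.
apply: contra_neq (@oner_neq0 int) => va0.
by have := congr1 (meval (fun=> 1)) va0; rewrite /va mevalXU meval0.
Qed.

Lemma Dab_neq0 : Dab != 0.
Proof.
apply: contra_neq (@oner_neq0 int) => Dab0.
pose v (i : 'I_4) : int := ((i == 0 :> nat) || (i == 3 :> nat))%:R.
have := congr1 (meval v) Dab0.
by rewrite /Dab /va /vb /valpha /vbeta mevalB !mevalM !mevalXU meval0 /v !inordK.
Qed.

Lemma Qa_coef0 : Qa`_0 = va%:P * 'X^2.
Proof.
rewrite /Qa /cst /vx /vy -rmorphXn !coefD -mulrA !coefCM coefMC coefX coefXn coefC /=.
by rewrite mulr0 mul0r mulr0 !add0r.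
Qed.

Lemma Qa_coef2 : Qa`_2 = va%:P.
Proof.
rewrite /Qa /cst /vx /vy -rmorphXn !coefD -mulrA !coefCM coefMC coefX coefXn coefC /=.
by rewrite mulr1 mul0r !mulr0 !addr0.
Qed.

Lemma size_Qa_gt1 : (1 < size Qa)%N.
Proof.
rewrite ltnNge; apply: contra va_neq0 => size_Qa.
by rewrite -polyC_eq0 -Qa_coef2 nth_default // (leq_trans size_Qa).
Qed.

Lemma Qa_neq0 : Qa != 0.
Proof. by rewrite -size_poly_gt0 (ltnW size_Qa_gt1). Qed.

Lemma Qa_coef0_neq0 : Qa`_0 != 0.
Proof. by rewrite Qa_coef0 mulf_neq0 ?polyC_eq0 ?va_neq0 // expf_neq0 // polyX_eq0. Qed.

Lemma va_Qalpha : cst va * Qalpha = cst Dab * (vx * vy) + Qa * cst valpha.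
Proof.
rewrite /Qalpha /Qa /Dab rmorphB !rmorphM /=.
(* Left concrete, these polynomials get unfolded by [ring], which then diverges. *)
move: (cst va) (cst vb) (cst valpha) (cst vbeta) => A B C D; ring.
Qed.

Lemma Qa_ndvd c k h : cst c * Qalpha ^+ k = Qa * h -> c = 0.
Proof.
move=> /(multiple_mul_expr_congr va_Qalpha) [g].
have -> : cst c * (cst Dab * (vx * vy)) ^+ k = ((c * Dab ^+ k)%:P * 'X^k)%:P * vx ^+ k.
  rewrite /cst /vy !exprMn !rmorphM !rmorphXn /=.
  move: (c%:P%:P : PXY) (Dab%:P%:P : PXY) vx (('X : {poly P4})%:P : PXY).
  by move=> u v w z; ring.
move=> /(monomial_multiple_eq0 Qa_coef0_neq0 size_Qa_gt1) /eqP.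
rewrite mulf_eq0 expf_eq0 polyX_eq0 andbF orbF polyC_eq0.
by rewrite mulf_eq0 expf_eq0 (negbTE Dab_neq0) andbF orbF => /eqP.
Qed.

Lemma vx_add_vy_neq0 : vx + vy != 0.
Proof.
apply: contra_neq (@oner_neq0 {poly P4}) => /(congr1 (coefp 1)).
by rewrite /= coefD coefX coefC coef0 addr0.
Qed.

Lemma vx_sub_vy_neq0 : vx - vy != 0.
Proof.
apply: contra_neq (@oner_neq0 {poly P4}) => /(congr1 (coefp 1)).
by rewrite /= coefB coefX coefC coef0 subr0.
Qed.

Lemma Qalpha_Qa_recurrence m (W V : PXY) (P : nat -> P4) :
  W != 0 -> Exy W = 0 -> Exy V = 0 ->
  W * homog_form cst Qalpha Qa m P = cst (Dab ^+ m) * V ->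
  forall r, (r < m)%N -> (m - r)%:R * P r = - Eop (P r.+1).
Proof.
move=> /mulfI W_lreg.
exact: (homog_form_recurrence ExyM Exy_cst Exy_Qalpha Exy_Qa (mulfI Qa_neq0)
  Qa_ndvd (derivationXn_eq0 EopM _ Eop_Dab) W_lreg).
Qed.

Theorem theorem8p2 (n : nat) : (1 <= n)%N ->
  (forall Psi : nat -> P4, is_Psi n Psi ->
     forall r : nat, (r < n./2)%N ->
       (n./2 - r)%:R * Psi r = - Eop (Psi r.+1)) /\
  (forall Phi : nat -> P4, is_Phi n Phi ->
     forall r : nat, (r < n.-1./2)%N ->
       (n.-1./2 - r)%:R * Phi r = - Eop (Phi r.+1)).
Proof.
have ExyXn p k : Exy p = 0 -> Exy (p ^+ k) = 0 by move/(derivationXn_eq0 ExyM k).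
have Exy_xpy : Exy (vx + vy) = 0 by rewrite raddfD /= Exy_vx Exy_vy addr0.
have Exy_xmy : Exy (vx - vy) = 0 by rewrite raddfB /= Exy_vx Exy_vy subrr.
move=> _; split=> P hP r lt_r; apply: (Qalpha_Qa_recurrence _ _ _ hP) => //.
- by rewrite expf_neq0 // vx_add_vy_neq0.
- exact: ExyXn.
- by rewrite raddfD /= !ExyXn ?Exy_vx ?Exy_vy ?addr0.
- by rewrite mulf_neq0 ?expf_neq0 ?vx_add_vy_neq0 ?vx_sub_vy_neq0.
- by rewrite ExyM ExyXn // Exy_xmy !mul0r mulr0 addr0.
- by rewrite raddfB /= !ExyXn ?Exy_vx ?Exy_vy ?subrr.
Qed.
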